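(* Let $n\ge 1$, let $f,g:\mathbb{R}^n\to\mathbb{R}$ be continuously differentiable with $f(\mathbf 0)=0$ and $g(\mathbf x)\neq 0$ for all $\mathbf x\in\mathbb{R}^n$, and consider the control system $\dot{\mathbf x}=\mathbf f(\mathbf x)+\mathbf g(\mathbf x)u$ with $\mathbf f(\mathbf x)=A_0\mathbf x+e_n f(\mathbf x)$, $\mathbf g(\mathbf x)=e_n g(\mathbf x)$ (notation in context). Let $N\in\mathbb{N}$, $T>0$, $\underline t\ge 0$, $\overline t=\underline t+NT$, $t_k=\underline t+kT$, and let $\mathbf x_0,\dots,\mathbf x_N\in\mathbb{R}^n$. For $k=0,\dots,N-1$ let $r_k:[0,T]\to\mathbb{R}$ be the unique Bézier curve of order $2n-1$ with $r_k^{(j-1)}(0)=x_k^j$ and $r_k^{(j-1)}(T)=x_{k+1}^j$ for $j=1,\dots,n$ (where $\mathbf x_k=(x_k^1,\dots,x_k^n)^\top$), and let $\mathbf r_k(\tau)=(r_k(\tau),r_k^{(1)}(\tau),\dots,r_k^{(n-1)}(\tau))^\top$. Then the function $\mathbf x_d:[\underline t,\overline t]\to\mathbb{R}^n$ defined by $\mathbf x_d(t)=\mathbf r_k(t-t_k)$ for $t\in[t_k,t_{k+1})$, $k=0,\dots,N-1$, and $\mathbf x_d(\overline t)=\mathbf x_N$, is a dynamically admissible trajectory for this system.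
   Context: $A_0\in\mathbb{R}^{n\times n}$ is the matrix $\begin{bmatrix}\mathbf 0&I\\0&\mathbf 0^\top\end{bmatrix}$ (ones on the superdiagonal, zeros elsewhere), and $e_n$ is the last standard basis vector of $\mathbb{R}^n$. A Bézier curve of order $p$ on $[0,T]$ is $r(\tau)=\boldsymbol\xi^\top\mathbf z(\tau)=\sum_{i=0}^p\xi_i z_i(\tau)$ with control points $\xi_i\in\mathbb{R}$ and Bernstein polynomials $z_i(\tau)=\binom{p}{i}(\tau/T)^i(1-\tau/T)^{p-i}$. (For order $2n-1$, the $2n$ boundary conditions above determine the control points uniquely.) A piecewise continuously differentiable function $\mathbf x_d:[\underline t,\overline t]\to\mathbb{R}^n$ (continuous, with derivative on the open intervals of a finite partition having one-sided limits) is a dynamically admissible trajectory if there is a piecewise continuous $u_d:[\underline t,\overline t]\to\mathbb{R}$ with $\dot{\mathbf x}_d(t)=\mathbf f(\mathbf x_d(t))+\mathbf g(\mathbf x_d(t))u_d(t)$ for almost all $t\in[\underline t,\overline t]$. *)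

From HB Require Import structures.
From mathcomp Require Import all_boot all_order all_algebra.
From mathcomp Require Import all_classical all_reals all_analysis.
Set Implicit Arguments. Unset Strict Implicit. Unset Printing Implicit Defensive.
Import Order.TTheory GRing.Theory Num.Theory.
Import numFieldNormedType.Exports.
Local Open Scope classical_set_scope.
Local Open Scope ring_scope.

Section Defs.
Variable R : realType.

Definition A0 (n : nat) : 'M[R]_n :=
  \matrix_(i < n, j < n) ((j : nat) == (i : nat).+1)%:R.

Definition e_last (n : nat) : 'cV[R]_n :=
  \col_(i < n) ((i : nat) == n.-1)%:R.

Definition drift n (f : 'cV[R]_n -> R) (x : 'cV[R]_n) : 'cV[R]_n :=
  A0 n *m x + f x *: e_last n.
Definition input n (g : 'cV[R]_n -> R) (x : 'cV[R]_n) : 'cV[R]_n :=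
  g x *: e_last n.

Definition C1 n (f : 'cV[R]_n -> R) : Prop :=
  (forall x, differentiable f x) /\ (forall v : 'cV[R]_n, continuous ('D_v f)).

Definition bernstein (T : R) (p i : nat) (tau : R) : R :=
  'C(p, i)%:R * (tau / T) ^+ i * (1 - tau / T) ^+ (p - i).
Definition bezier (T : R) (p : nat) (xi : nat -> R) (tau : R) : R :=
  \sum_(i < p.+1) xi i * bernstein T p i tau.

Definition partition (a b : R) (m : nat) (s : nat -> R) : Prop :=
  s 0%N = a /\ s m = b /\ (forall i, (i < m)%N -> s i < s i.+1).

Definition piecewise_continuous (a b : R) (u : R -> R) : Prop :=
  exists (m : nat) (s : nat -> R), partition a b m s /\
    forall i, (i < m)%N ->
      {in `]s i, s i.+1[, continuous u} /\
      (exists l : R, u x @[x --> (s i)^'+] --> l) /\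
      (exists l : R, u x @[x --> (s i.+1)^'-] --> l).

Definition piecewise_C1 n (a b : R) (x : R -> 'cV[R]_n) : Prop :=
  {within `[a, b], continuous x} /\
  exists (m : nat) (s : nat -> R), partition a b m s /\
    forall i, (i < m)%N ->
      (forall t, t \in `]s i, s i.+1[ -> derivable x t 1) /\
      {in `]s i, s i.+1[, continuous (derive1 x)} /\
      (exists l : 'cV[R]_n, derive1 x t @[t --> (s i)^'+] --> l) /\
      (exists l : 'cV[R]_n, derive1 x t @[t --> (s i.+1)^'-] --> l).

Definition dyn_admissible n (F G : 'cV[R]_n -> 'cV[R]_n) (a b : R)
    (x : R -> 'cV[R]_n) : Prop :=
  piecewise_C1 a b x /\
  exists u : R -> R, piecewise_continuous a b u /\
    {ae (@lebesgue_measure R), forall t, t \in `[a, b] ->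
        derivable x t 1 /\ derive1 x t = F (x t) + u t *: G (x t)}.

End Defs.

From Pilot Require Import Defs.
From HB Require Import structures.
From mathcomp Require Import all_boot all_order all_algebra.
From mathcomp Require Import all_classical all_reals all_analysis.
From mathcomp Require Import ring.
Import Order.TTheory GRing.Theory Num.Theory.
Import numFieldNormedType.Exports.
Local Open Scope classical_set_scope.
Local Open Scope ring_scope.

(** On each interval [t_k, t_(k+1)] the trajectory is the jet
    (r_k, r_k', ..., r_k^(n-1)) of a polynomial, so it is smooth there and its
    first n - 1 coordinates have as derivatives the next coordinates: this is
    exactly the chain structure x_j' = x_(j+1) imposed by the drift A_0 x.  The
    last coordinate is matched by the feedback u = (r_k^(n) - f(x)) / g(x),
    which is continuous because f, g are continuous and g never vanishes.  The
    boundary conditions of the Bezier curves make consecutive pieces meet at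
    the nodes t_k, so the glued trajectory is continuous, piecewise C^1, and
    satisfies the dynamics away from the countable (hence null) set of nodes. *)

Section Polynomials.
Context {R : realType}.

Definition bezier_poly (T : R) (p : nat) (c : nat -> R) : {poly R} :=
  \sum_(i < p.+1)
    (c i * 'C(p, i)%:R) *: ((T^-1 *: 'X) ^+ i * (1 - T^-1 *: 'X) ^+ (p - i)).

Lemma bezierE (T : R) p c : bezier T p c = horner (bezier_poly T p c).
Proof.
apply/funext => tau; rewrite /bezier /bezier_poly horner_sum.
apply: eq_bigr => i _.
rewrite hornerZ hornerM !horner_exp hornerD hornerN !hornerZ hornerX hornerC.
by rewrite /bernstein !mulrA [_ * T^-1]mulrC.
Qed.

Lemma derive1n_horner (P : {poly R}) j : derive1n j (horner P) = horner P^`(j).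
Proof.
elim: j => [|j IH]; first by apply/funext => t; rewrite derivn0.
by rewrite derive1nS IH -derivE derivnS.
Qed.

Lemma derivn_comp_XsubC (P : {poly R}) (a : R) j :
  (P \Po ('X - a%:P))^`(j) = P^`(j) \Po ('X - a%:P).
Proof.
elim: j => [|j IH]; first by rewrite !derivn0.
by rewrite !derivnS IH deriv_comp derivXsubC mulr1.
Qed.

Definition jet (n : nat) (P : {poly R}) (t : R) : 'cV[R]_n :=
  \col_(j < n) P^`(j).[t].

Lemma jet_entry n P (i : 'I_n) j : (fun t => jet n P t i j) = horner P^`(i).
Proof. by apply/funext => t; rewrite mxE. Qed.

Lemma derivable_jet n P t : derivable (jet n P) t 1.
Proof.
by apply/derivable_mxP => i j; rewrite jet_entry; exact: derivable_horner.
Qed.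

Lemma continuous_jet n P : continuous (jet n P).
Proof.
move=> t; apply/differentiable_continuous.
exact/derivable1_diffP/derivable_jet.
Qed.

Lemma derive1_jet n P : derive1 (jet n P) = jet n P^`().
Proof.
apply/funext => t; rewrite derive1E derive_mx; last exact: derivable_jet.
apply/matrixP => i j; rewrite !mxE jet_entry -derive1E -derivE.
by rewrite -derivnS derivSn.
Qed.

Lemma jet_derivE n P t (i : 'I_n.+1) :
  (i < n)%N -> jet n.+1 P^`() t i ord0 = jet n.+1 P t (inord i.+1) ord0.
Proof. by move=> lt_in; rewrite !mxE inordK // -derivSn. Qed.

Lemma jet_bezier n (T : R) p c a t :
  jet n (bezier_poly T p c \Po ('X - a%:P)) t =
  \col_(j < n) derive1n j (bezier T p c) (t - a).
Proof.
apply/matrixP => i j; rewrite !mxE derivn_comp_XsubC horner_comp hornerXsubC.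
by rewrite bezierE derive1n_horner.
Qed.

End Polynomials.

Section ChainSystems.
Context {R : realType}.

Lemma continuous_mx_entry {m n : nat} (i : 'I_m) (j : 'I_n) :
  continuous (fun M : 'M[R]_(m, n) => M i j).
Proof.
move=> M A /nbhs_ballP[e e_gt0 MeA]; apply/nbhs_ballP.
by exists e => // M' [_ MM']; apply: MeA; exact: MM'.
Qed.

Definition feedback {n} (f g : 'cV[R]_n.+1 -> R) (X D : 'cV[R]_n.+1) : R :=
  (D ord_max ord0 - f X) / g X.

Lemma drift_input_feedback n (f g : 'cV[R]_n.+1 -> R) (X D : 'cV[R]_n.+1) :
  g X != 0 ->
  (forall i : 'I_n.+1, (i < n)%N -> D i ord0 = X (inord i.+1) ord0) ->
  D = drift f X + feedback f g X D *: input g X.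
Proof.
move=> gX_neq0 chainD; apply/matrixP => i j.
rewrite ord1 /drift /input /feedback /A0 /e_last !mxE.
under eq_bigr do rewrite mxE.
have [lt_in|le_ni] := ltnP i n.
  rewrite (bigD1 (inord i.+1)) //= big1; last first.
    move=> l l_neq; rewrite (_ : (l == i.+1 :> nat) = false) ?mul0r //.
    by apply: contraNF l_neq => /eqP l_eq; apply/eqP/val_inj; rewrite /= inordK.
  by rewrite inordK ?ltnS // eqxx mul1r (ltn_eqF lt_in) !mulr0 !addr0 chainD.
have -> : i = ord_max by apply/val_inj/eqP; rewrite eqn_leq le_ni -ltnS ltn_ord.
rewrite big1; last by move=> l _; rewrite ltn_eqF ?mul0r.
by rewrite /= eqxx !mulr1 add0r divfK // addrC subrK.
Qed.

Lemma continuous_feedback n (f g : 'cV[R]_n.+1 -> R) (y : R -> 'cV[R]_n.+1) :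
  continuous f -> continuous g -> (forall X, g X != 0) ->
  continuous y -> continuous (derive1 y) ->
  continuous (fun t => feedback f g (y t) (derive1 y t)).
Proof.
move=> f_cont g_cont g_neq0 y_cont y'_cont t; apply: cvgM; first apply: cvgB.
- exact: continuous_comp (y'_cont t) (continuous_mx_entry ord_max ord0 _).
- exact: continuous_comp (y_cont t) (f_cont _).
- by apply: cvgV => //; exact: continuous_comp (y_cont t) (g_cont _).
Qed.

End ChainSystems.

Section OneSidedLimits.
Context {R : realType} {V : normedModType R}.

Lemma itvoo_eq_limits {a b : R} {h v : R -> V} :
  a < b -> continuous h -> (forall t, t \in `]a, b[ -> v t = h t) ->
  {in `]a, b[, continuous v} /\
  (exists l : V, v t @[t --> a^'+] --> l) /\
  (exists l : V, v t @[t --> b^'-] --> l).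
Proof.
move=> lt_ab h_cont vh; split; [|split].
- move=> t t_ab; rewrite /continuous_at (vh t t_ab).
  apply: cvg_trans (h_cont t); apply: near_eq_cvg.
  by apply: filterS (near_in_itvoo t_ab) => y /vh ->.
- exists (h a); apply: cvg_trans (cvg_at_right_filter (h_cont a)).
  apply: near_eq_cvg; near=> y; rewrite vh // in_itv /=; apply/andP; split.
    by near: y; exact: nbhs_right_gt.
  by near: y; exact: nbhs_right_lt.
- exists (h b); apply: cvg_trans (cvg_at_left_filter (h_cont b)).
  apply: near_eq_cvg; near=> y; rewrite vh // in_itv /=; apply/andP; split.
    by near: y; exact: nbhs_left_gt.
  by near: y; exact: nbhs_left_lt.
Unshelve. all: by end_near. Qed.

Lemma itvcc_eq_cvg_right {a b t : R} {h v : R -> V} :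
  a <= t < b -> (forall y, a <= y <= b -> v y = h y) -> h @ t --> h t ->
  v @ t^'+ --> v t.
Proof.
move=> /andP[le_at lt_tb] vh h_cont; rewrite vh ?le_at ?ltW //.
apply: cvg_trans (cvg_at_right_filter h_cont).
apply: near_eq_cvg; near=> y; rewrite vh //; apply/andP; split.
  by apply: (le_trans le_at); apply: ltW; near: y; exact: nbhs_right_gt.
by apply: ltW; near: y; exact: nbhs_right_lt.
Unshelve. all: by end_near. Qed.

Lemma itvcc_eq_cvg_left {a b t : R} {h v : R -> V} :
  a < t <= b -> (forall y, a <= y <= b -> v y = h y) -> h @ t --> h t ->
  v @ t^'- --> v t.
Proof.
move=> /andP[lt_at le_tb] vh h_cont; rewrite vh ?le_tb ?ltW //.
apply: cvg_trans (cvg_at_left_filter h_cont).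
apply: near_eq_cvg; near=> y; rewrite vh //; apply/andP; split.
  by apply: ltW; near: y; exact: nbhs_left_gt.
by apply: (le_trans _ le_tb); apply: ltW; near: y; exact: nbhs_left_lt.
Unshelve. all: by end_near. Qed.

End OneSidedLimits.

Lemma glue_at_nodes {R : realType} {V : Type} {N : nat} {s : nat -> R}
    {Q : nat -> R -> V} {xd : R -> V} {c : nat -> V} :
  (forall i, s i < s i.+1) ->
  (forall k, (k < N)%N -> forall t, s k <= t < s k.+1 -> xd t = Q k t) ->
  (forall k, (k < N)%N -> Q k (s k) = c k /\ Q k (s k.+1) = c k.+1) ->
  xd (s N) = c N ->
  forall k, (k < N)%N -> forall t, s k <= t <= s k.+1 -> xd t = Q k t.
Proof.
move=> s_incr xdQ Q_nodes xd_end k lt_kN t /andP[le_skt].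
rewrite le_eqVlt => /predU1P[->|lt_t]; last by rewrite (xdQ k) // le_skt.
rewrite (Q_nodes k lt_kN).2.
have [lt_k1N|] := ltnP k.+1 N.
  by rewrite (xdQ k.+1) ?lexx ?s_incr // (Q_nodes _ lt_k1N).1.
by move=> le_Nk1; have /eqP <- : N == k.+1 by rewrite eqn_leq le_Nk1 lt_kN.
Qed.

Section Gluing.
Context {R : realType} {n N : nat} {s : nat -> R}.
Hypothesis s_incr : forall i, s i < s i.+1.
Context {Q : nat -> R -> 'cV[R]_n} {xd : R -> 'cV[R]_n}.
Hypothesis Q_derivable : forall k t, derivable (Q k) t 1.
Hypothesis Q'_continuous : forall k, continuous (derive1 (Q k)).
Hypothesis xd_agree :
  forall k, (k < N)%N -> forall t, s k <= t <= s k.+1 -> xd t = Q k t.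

Lemma partition_nodes : Defs.partition (s 0) (s N) N s.
Proof. by split; [|split=> // i _; exact: s_incr]. Qed.

Lemma exists_piece_right {t} :
  s 0 <= t < s N -> exists2 k, (k < N)%N & s k <= t < s k.+1.
Proof.
elim: N => [|M IH] /andP[le_0t lt_tM].
  by have := le_lt_trans le_0t lt_tM; rewrite ltxx.
have [lt_tsM|le_sMt] := ltP t (s M); last by exists M; rewrite ?le_sMt.
by have [|k lt_kM] := IH; [rewrite le_0t | exists k => //; exact: ltnW].
Qed.

Lemma exists_piece_left {t} :
  s 0 < t <= s N -> exists2 k, (k < N)%N & s k < t <= s k.+1.
Proof.
elim: N => [|M IH] /andP[lt_0t le_tM].
  by have := lt_le_trans lt_0t le_tM; rewrite ltxx.
have [le_tsM|lt_sMt] := leP t (s M); last by exists M; rewrite ?lt_sMt.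
by have [|k lt_kM] := IH; [rewrite lt_0t | exists k => //; exact: ltnW].
Qed.

Lemma Q_continuous k : continuous (Q k).
Proof.
move=> t; apply/differentiable_continuous.
exact/derivable1_diffP/Q_derivable.
Qed.

Lemma glued_in_piece {k t} : (k < N)%N -> t \in `]s k, s k.+1[ ->
  [/\ xd t = Q k t, derivable xd t 1 & derive1 xd t = derive1 (Q k) t].
Proof.
move=> lt_kN t_in.
have near_Q : \forall y \near t, Q k y = xd y.
  apply: filterS (near_in_itvoo t_in) => y.
  by rewrite in_itv /= => /andP[? ?]; rewrite (xd_agree k lt_kN) // !ltW.
split.
- move: t_in; rewrite in_itv /= => /andP[? ?].
  by rewrite (xd_agree k lt_kN) // !ltW.
- exact: near_eq_derivable near_Q (Q_derivable k t).
- by rewrite !derive1E; apply: near_eq_derive; apply: filterS near_Q.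
Qed.

Lemma glued_cvg_right {t} : s 0 <= t < s N -> xd @ t^'+ --> xd t.
Proof.
move=> /exists_piece_right[k lt_kN t_in].
exact: itvcc_eq_cvg_right t_in (xd_agree k lt_kN) (Q_continuous k t).
Qed.

Lemma glued_cvg_left {t} : s 0 < t <= s N -> xd @ t^'- --> xd t.
Proof.
move=> /exists_piece_left[k lt_kN t_in].
exact: itvcc_eq_cvg_left t_in (xd_agree k lt_kN) (Q_continuous k t).
Qed.

Lemma continuous_glued : {within `[s 0, s N], continuous xd}.
Proof.
have s_lt : {homo s : i j / (i < j)%N >-> i < j} := homo_ltn lt_trans s_incr.
have [->|N_gt0] := posnP N.
  apply/subspace_continuousP => t; rewrite /= in_itv /= -eq_le => /eqP <-.
  apply/cvgrPdist_le => e e_gt0; rewrite near_withinE; apply: nearW => y /=.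
  by rewrite in_itv /= -eq_le => /eqP <-; rewrite subrr normr0 ltW.
apply/(continuous_within_itvP xd (s_lt _ _ N_gt0)); split.
- move=> t; rewrite in_itv /= => /andP[lt_0t lt_tN].
  apply/left_right_continuousP; split.
    by apply: glued_cvg_left; rewrite lt_0t ltW.
  by apply: glued_cvg_right; rewrite lt_tN ltW.
- by apply: glued_cvg_right; rewrite lexx s_lt.
- by apply: glued_cvg_left; rewrite lexx s_lt.
Qed.

Lemma piecewise_C1_glued : piecewise_C1 (s 0) (s N) xd.
Proof.
split; first exact: continuous_glued.
exists N, s; split; first exact: partition_nodes.
move=> k lt_kN; split; first by move=> t /(glued_in_piece lt_kN)[].
apply: itvoo_eq_limits (s_incr k) (Q'_continuous k) _.
by move=> t /(glued_in_piece lt_kN)[].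
Qed.

Lemma piecewise_continuous_glued (U : nat -> R -> R) (u : R -> R) :
  (forall k, continuous (U k)) ->
  (forall k, (k < N)%N -> forall t, t \in `]s k, s k.+1[ -> u t = U k t) ->
  piecewise_continuous (s 0) (s N) u.
Proof.
move=> U_cont uU; exists N, s; split; first exact: partition_nodes.
by move=> k lt_kN; exact: itvoo_eq_limits (s_incr k) (U_cont k) (uU k lt_kN).
Qed.

Lemma ae_in_pieces (P : R -> Prop) :
  (forall k, (k < N)%N -> forall t, t \in `]s k, s k.+1[ -> P t) ->
  {ae (@lebesgue_measure R), forall t, t \in `[s 0, s N] -> P t}.
Proof.
move=> P_pieces.
have countable_nodes : countable (range s).
  exact: sub_countable (card_image_le s setT) (countableP setT).
exists (range s); split.
- by apply: countable_measurable => //; exact: measurable_set1.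
- exact: countable_lebesgue_measure0.
move=> t /=; apply: contra_notP => not_node.
rewrite in_itv /= => /andP[le_0t le_tN].
have lt_tN : t < s N.
  by rewrite lt_neqAle le_tN andbT; apply/eqP => tN; apply: not_node; exists N.
have /exists_piece_right[k lt_kN /andP[le_kt lt_tk1]] : s 0 <= t < s N.
  by rewrite le_0t lt_tN.
apply: (P_pieces k lt_kN); rewrite in_itv /= lt_tk1 andbT lt_neqAle le_kt andbT.
by apply/eqP => tk; apply: not_node; exists k.
Qed.

Lemma dyn_admissible_glued (F G : 'cV[R]_n -> 'cV[R]_n)
    (Phi : 'cV[R]_n -> 'cV[R]_n -> R) :
  (forall k, continuous (fun t => Phi (Q k t) (derive1 (Q k) t))) ->
  (forall k, (k < N)%N -> forall t, t \in `]s k, s k.+1[ ->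
     derive1 (Q k) t =
     F (Q k t) + Phi (Q k t) (derive1 (Q k) t) *: G (Q k t)) ->
  dyn_admissible F G (s 0) (s N) xd.
Proof.
move=> Phi_cont Q_dyn; split; first exact: piecewise_C1_glued.
exists (fun t => Phi (xd t) (derive1 xd t)); split.
  apply: piecewise_continuous_glued Phi_cont _ => k lt_kN t t_in.
  by have [-> _ ->] := glued_in_piece lt_kN t_in.
apply: ae_in_pieces => k lt_kN t t_in.
have [xdQ xd_der ->] := glued_in_piece lt_kN t_in.
by split=> //; rewrite xdQ; exact: Q_dyn.
Qed.

End Gluing.

Theorem lemma2 (R : realType) (n : nat) (hn : (0 < n)%N)
  (f g : 'cV[R]_n -> R) (hf : C1 f) (hg : C1 g) (hf0 : f 0 = 0)
  (hgnz : forall x, g x != 0)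
  (N : nat) (T tlo : R) (hT : 0 < T) (htlo : 0 <= tlo)
  (x : nat -> 'cV[R]_n)
  (xi : nat -> nat -> R)
  (hxi : forall k, (k < N)%N -> forall j : 'I_n,
     derive1n j (bezier T (2 * n).-1 (xi k)) 0 = x k j ord0 /\
     derive1n j (bezier T (2 * n).-1 (xi k)) T = x k.+1 j ord0)
  (xd : R -> 'cV[R]_n)
  (hxd : forall k, (k < N)%N -> forall t,
     tlo + k%:R * T <= t < tlo + k.+1%:R * T ->
     xd t = \col_(j < n) derive1n j (bezier T (2 * n).-1 (xi k))
                                    (t - (tlo + k%:R * T)))
  (hxdN : xd (tlo + N%:R * T) = x N) :
  dyn_admissible (drift f) (input g) tlo (tlo + N%:R * T) xd.
Proof.
case: n hn f g hf hg hf0 hgnz x hxi xd hxd hxdN => // n _ f g hf hg _ g_neq0.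
move=> x hxi xd hxd hxdN.
pose s k := tlo + k%:R * T.
pose Q k := jet n.+1 (bezier_poly T (2 * n.+1).-1 (xi k) \Po ('X - (s k)%:P)).
have s_incr i : s i < s i.+1 by rewrite ltrD2l ltr_pM2r // ltr_nat.
have xd_agree :
    forall k, (k < N)%N -> forall t, s k <= t <= s k.+1 -> xd t = Q k t.
  apply: (glue_at_nodes s_incr _ _ hxdN) => [k lt_kN t t_in|k lt_kN].
    by rewrite /Q jet_bezier; exact: hxd.
  have sk1E : s k.+1 - s k = T by rewrite /s mulrSr; ring.
  by split; apply/matrixP => i j; rewrite ord1 /Q jet_bezier mxE ?subrr ?sk1E;
    [exact: (hxi k lt_kN i).1 | exact: (hxi k lt_kN i).2].
have f_cont : continuous f by move=> X; exact/differentiable_continuous/hf.1.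
have g_cont : continuous g by move=> X; exact/differentiable_continuous/hg.1.
have Q_derivable k t : derivable (Q k) t 1 by exact: derivable_jet.
have Q'_continuous k : continuous (derive1 (Q k)).
  by rewrite derive1_jet; exact: continuous_jet.
rewrite {1}(_ : tlo = s 0); last by rewrite /s mul0r addr0.
apply: (dyn_admissible_glued s_incr Q_derivable Q'_continuous xd_agree _ _
  (feedback f g)).
- by move=> k; apply: continuous_feedback => //; exact: continuous_jet.
- move=> k _ t _; apply: drift_input_feedback => // i lt_in.
  by rewrite /Q derive1_jet jet_derivE.
Qed.
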